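(* Let $|B(\vec\lambda,\Phi)\rangle$ be a balanced state with $\vec\lambda=(\lambda_1,\lambda_2,\lambda_3)$, and fix a context $(A,B,C)$ of equatorial measurement angles in $[0,\pi)$ on qubits $1,2,3$. Then: 1. For a given $c\in\{0,1\}$, if one of the events $(A,B,C)\to(0,0,c)$, $(A,B,C)\to(1,1,c)$ is impossible, then the other is impossible if and only if $\delta(\lambda_1,A)\equiv\delta(\lambda_2,B)\equiv\pi$. 2. For a given $c\in\{0,1\}$, if one of the events $(A,B,C)\to(0,1,c)$, $(A,B,C)\to(1,0,c)$ is impossible, then the other is impossible if and only if $\delta(\lambda_1,A)\equiv\delta(\lambda_2,B)$. The analogous statements hold for any other pair of qubits (with the outcome of the remaining qubit fixed and the corresponding $\lambda_i$ and angles).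
   Context: $\equiv$ denotes equality modulo $2\pi$. For $\lambda\in[0,\frac{\pi}{2})$ let $|v_\lambda\rangle=\cos\frac{\lambda}{2}|0\rangle+\sin\frac{\lambda}{2}|1\rangle$, $|w_\lambda\rangle=\sin\frac{\lambda}{2}|0\rangle+\cos\frac{\lambda}{2}|1\rangle$. A balanced state is $|B(\vec\lambda,\Phi)\rangle=\frac{1}{\sqrt2}(|v_{\lambda_1}\rangle|v_{\lambda_2}\rangle|v_{\lambda_3}\rangle+e^{i\Phi}|w_{\lambda_1}\rangle|w_{\lambda_2}\rangle|w_{\lambda_3}\rangle)$ with $\lambda_i\in[0,\frac{\pi}{2})$, $\Phi\in[0,2\pi)$. The equatorial measurement with angle $\varphi$ is $E_\varphi=\cos\varphi X+\sin\varphi Y$, with $+1$ eigenvector $|\varphi\rangle=\frac{1}{\sqrt2}(|0\rangle+e^{i\varphi}|1\rangle)$ and $-1$ eigenvector $|\varphi+\pi\rangle$; outcomes $+1,-1$ are relabelled $0,1$. The event $(A,B,C)\to(a,b,c)$ is impossible if $(\langle A+a\pi|\otimes\langle B+b\pi|\otimes\langle C+c\pi|)|B(\vec\lambda,\Phi)\rangle=0$. Define modulo $2\pi$: $\beta(\lambda,\varphi)=\varphi-2\arctan\left(\frac{\cos\frac{\lambda}{2}\sin\varphi}{\sin\frac{\lambda}{2}+\cos\frac{\lambda}{2}\cos\varphi}\right)$ and $\delta(\lambda,\varphi)=\beta(\lambda,\varphi+\pi)-\beta(\lambda,\varphi)\equiv\pi-2\arctan(\sin\varphi\tan\lambda)$.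 *)

From Stdlib Require Import Reals ZArith.
From Coquelicot Require Import Complex.
Open Scope R_scope.

Definition eqm2pi (x y : R) : Prop := exists k : Z, x - y = 2 * PI * IZR k.

Definition expi (t : R) : C := (cos t, sin t).

(* a qubit state: pair of amplitudes on |0>, |1> *)
Definition ket := (C * C)%type.

Definition braket (u v : ket) : C :=
  (Cconj (fst u) * fst v + Cconj (snd u) * snd v)%C.

Definition v_ket (lam : R) : ket := (RtoC (cos (lam / 2)), RtoC (sin (lam / 2))).
Definition w_ket (lam : R) : ket := (RtoC (sin (lam / 2)), RtoC (cos (lam / 2))).

Definition eq_ket (phi : R) : ket :=
  (RtoC (/ sqrt 2), (RtoC (/ sqrt 2) * expi phi)%C).

(* outcome bit: false = outcome 0 (eigenvalue +1), true = outcome 1 (eigenvalue -1);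
   the projected eigenvector is |phi + a*pi> *)
Definition out_angle (phi : R) (a : bool) : R := phi + (if a then PI else 0).

(* (<A+a pi| (x) <B+b pi| (x) <C+c pi|) |B(lambda, Phi)>, expanded by linearity *)
Definition amplitude (l1 l2 l3 Phi A B Cc : R) (a b c : bool) : C :=
  (RtoC (/ sqrt 2) *
   ( braket (eq_ket (out_angle A a)) (v_ket l1)
     * braket (eq_ket (out_angle B b)) (v_ket l2)
     * braket (eq_ket (out_angle Cc c)) (v_ket l3)
   + expi Phi
     * (braket (eq_ket (out_angle A a)) (w_ket l1)
        * braket (eq_ket (out_angle B b)) (w_ket l2)
        * braket (eq_ket (out_angle Cc c)) (w_ket l3))))%C.

Definition impossible (l1 l2 l3 Phi A B Cc : R) (a b c : bool) : Prop :=
  amplitude l1 l2 l3 Phi A B Cc a b c = 0%C.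

(* beta(lambda, phi) = phi - 2 arctan(num/den), modulo 2 pi.  When den = 0
   (num is then nonzero for lambda in [0, pi/2)), arctan(+-oo) = +-pi/2, so
   2 arctan = +-pi, which is pi modulo 2 pi. *)
Definition beta (lam phi : R) : R :=
  let num := cos (lam / 2) * sin phi in
  let den := sin (lam / 2) + cos (lam / 2) * cos phi in
  if Req_EM_T den 0 then phi - PI else phi - 2 * atan (num / den).

Definition delta (lam phi : R) : R := beta lam (phi + PI) - beta lam phi.

(* The two claims of the lemma for a pair of qubits whose measurement outcomes
   are (x, y) (the third outcome fixed inside imp), with delta values d1, d2. *)
Definition pair_claim (imp : bool -> bool -> Prop) (d1 d2 : R) : Prop :=
  (imp false false -> (imp true true <-> (eqm2pi d1 PI /\ eqm2pi d2 PI))) /\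
  (imp true true -> (imp false false <-> (eqm2pi d1 PI /\ eqm2pi d2 PI))) /\
  (imp false true -> (imp true false <-> eqm2pi d1 d2)) /\
  (imp true false -> (imp false true <-> eqm2pi d1 d2)).

From Stdlib Require Import Reals ZArith Lra Lia Morphisms.
From Coquelicot Require Import Complex.
Open Scope R_scope.

(* Since <phi|w_lam> = e^{i beta(lam, phi)} <phi|v_lam> and <phi|v_lam> <> 0, the
   amplitude of an event is a nonzero number times 1 + e^{i (Phi + beta_1 + beta_2 + beta_3)},
   so the event is impossible iff Phi + beta_1 + beta_2 + beta_3 = pi (mod 2 pi).
   Flipping the outcome on qubit i adds delta_i to this phase.  Hence, once one event of a
   pair is impossible, the other one is impossible iff delta_1 + delta_2 = 0, respectively
   delta_1 = delta_2 (mod 2 pi).  For angles in [0, pi] the closed form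
   delta = pi - 2 arctan (sin phi tan lam) lies in (0, pi], so delta_1 + delta_2 = 0 forces
   delta_1 = delta_2 = pi. *)

Lemma eqm2pi_iff_cos_sin x y : eqm2pi x y <-> cos x = cos y /\ sin x = sin y.
Proof.
  split.
  - intros [k Hk]. replace x with (y + 2 * PI * IZR k) by lra.
    assert (Hs : sin (PI * IZR k) = 0) by (apply sin_eq_0_1; exists k; ring).
    replace (2 * PI * IZR k) with (2 * (PI * IZR k)) by ring.
    rewrite cos_plus, sin_plus, cos_2a_sin, sin_2a, Hs. split; ring.
  - intros [Hc Hs].
    assert (Hcos : cos (x - y) = 1).
    { rewrite cos_minus, Hc, Hs. pose proof (sin2_cos2 y). unfold Rsqr in *. lra. }
    assert (Hhalf : sin ((x - y) / 2) = 0).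
    { replace (x - y) with (2 * ((x - y) / 2)) in Hcos by field.
      rewrite cos_2a_sin in Hcos. nra. }
    destruct (sin_eq_0_0 _ Hhalf) as [k Hk]. exists k. lra.
Qed.

Lemma eqm2pi_eq_of_close x y : y - 2 * PI < x < y + 2 * PI -> eqm2pi x y -> x = y.
Proof.
  intros Hxy [k Hk]. pose proof PI_RGT_0.
  assert (Hlo : (-1 < k)%Z) by (apply lt_IZR; nra).
  assert (Hhi : (k < 1)%Z) by (apply lt_IZR; nra).
  replace k with 0%Z in Hk by lia. lra.
Qed.

Lemma eqm2pi_sub_0 x y : eqm2pi (x - y) 0 <-> eqm2pi x y.
Proof. split; intros [k Hk]; exists k; lra. Qed.

Lemma eqm2pi_opp_0 x : eqm2pi (- x) 0 <-> eqm2pi x 0.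
Proof. split; intros [k Hk]; exists (- k)%Z; rewrite opp_IZR; lra. Qed.

Lemma eqm2pi_PI_iff a b : eqm2pi a PI -> (eqm2pi b PI <-> eqm2pi (b - a) 0).
Proof.
  intros [k Hk]. split; intros [m Hm].
  - exists (m - k)%Z. rewrite minus_IZR. lra.
  - exists (m + k)%Z. rewrite plus_IZR. lra.
Qed.

Definition upper_arc (d : R) : Prop := exists e, 0 < e <= PI /\ eqm2pi d e.

Lemma eqm2pi_add_0_iff d1 d2 : upper_arc d1 -> upper_arc d2 ->
  eqm2pi (d1 + d2) 0 <-> eqm2pi d1 PI /\ eqm2pi d2 PI.
Proof.
  intros (e1 & He1 & k1 & Hk1) (e2 & He2 & k2 & Hk2). pose proof PI_RGT_0.
  split.
  - intros [k Hk].
    assert (Hsum : e1 + e2 = 2 * PI).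
    { apply eqm2pi_eq_of_close; [lra|].
      exists (k - k1 - k2 - 1)%Z. rewrite !minus_IZR. lra. }
    split; [exists k1 | exists k2]; lra.
  - intros [[m1 Hm1] [m2 Hm2]]. exists (m1 + m2 + 1)%Z. rewrite !plus_IZR. lra.
Qed.

Lemma eq_on_two_circles (a b x y u v L R : R) :
  a * a + b * b = 1 -> x * x + y * y = 1 ->
  L - R = u * (a * a + b * b - 1) + v * (x * x + y * y - 1) -> L = R.
Proof. intros Hab Hxy H. rewrite Hab, Hxy in H. lra. Qed.

Lemma sin_cos_half l :
  sin l = 2 * sin (l / 2) * cos (l / 2) /\
  cos l = cos (l / 2) * cos (l / 2) - sin (l / 2) * sin (l / 2).
Proof. rewrite <- sin_2a, <- cos_2a. replace (2 * (l / 2)) with l by field. now split. Qed.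

Lemma one_add_sin_mul_cos_pos l t : 0 <= l < PI / 2 -> 0 < 1 + sin l * cos t.
Proof.
  intros Hl. pose proof PI_RGT_0.
  assert (Hs : 0 <= sin l) by (apply sin_ge_0; lra).
  assert (Hc : 0 < cos l) by (apply cos_gt_0; lra).
  pose proof (sin2_cos2 l) as H1. unfold Rsqr in H1.
  pose proof (COS_bound t).
  nra.
Qed.

Lemma cos_sin_double_atan N D : D <> 0 ->
  cos (2 * atan (N / D)) * (D * D + N * N) = D * D - N * N /\
  sin (2 * atan (N / D)) * (D * D + N * N) = 2 * N * D.
Proof.
  intros HD. rewrite cos_2a, sin_2a, cos_atan, sin_atan. unfold Rsqr.
  set (q := N / D).
  assert (Hq : 0 < 1 + q * q) by nra.
  assert (Hr : sqrt (1 + q * q) * sqrt (1 + q * q) = 1 + q * q) by (apply sqrt_sqrt; lra).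
  assert (Hr0 : 0 < sqrt (1 + q * q)) by (apply sqrt_lt_R0; lra).
  assert (HDN : 0 < D * D + N * N) by nra.
  split.
  - replace (1 / sqrt (1 + q * q) * (1 / sqrt (1 + q * q))
             - q / sqrt (1 + q * q) * (q / sqrt (1 + q * q)))
      with ((1 - q * q) / (sqrt (1 + q * q) * sqrt (1 + q * q))) by (field; lra).
    rewrite Hr. unfold q. field. split; lra.
  - replace (2 * (q / sqrt (1 + q * q)) * (1 / sqrt (1 + q * q)))
      with (2 * q / (sqrt (1 + q * q) * sqrt (1 + q * q))) by (field; lra).
    rewrite Hr. unfold q. field. split; lra.
Qed.

Lemma cos_sin_beta l t : 0 <= l < PI / 2 ->
  cos (beta l t) * (1 + sin l * cos t) = sin l + cos t /\
  sin (beta l t) * (1 + sin l * cos t) = - (cos l * sin t).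
Proof.
  intros Hl. destruct (sin_cos_half l) as [-> ->]. unfold beta.
  pose proof (sin2_cos2 (l / 2)) as Hsc. pose proof (sin2_cos2 t) as HCS.
  unfold Rsqr in *.
  set (s := sin (l / 2)) in *. set (c := cos (l / 2)) in *.
  set (C := cos t) in *. set (S := sin t) in *.
  (* θ = 2 arg (D + i N) for D = s + c C, N = c S; the branch D = 0 of [beta] is θ = PI. *)
  assert (Hθ : exists θ,
    (if Req_EM_T (s + c * C) 0 then t - PI else t - 2 * atan (c * S / (s + c * C))) = t - θ /\
    cos θ * ((s + c * C) * (s + c * C) + (c * S) * (c * S))
      = (s + c * C) * (s + c * C) - (c * S) * (c * S) /\
    sin θ * ((s + c * C) * (s + c * C) + (c * S) * (c * S)) = 2 * (c * S) * (s + c * C)).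
  { destruct Req_EM_T as [HD | HD].
    - exists PI. rewrite cos_PI, sin_PI, HD. split; [reflexivity | split; ring].
    - exists (2 * atan (c * S / (s + c * C))). split; [reflexivity|].
      now apply cos_sin_double_atan. }
  destruct Hθ as (θ & -> & Hcos & Hsin).
  assert (Hnorm : (s + c * C) * (s + c * C) + (c * S) * (c * S) = 1 + 2 * s * c * C).
  { apply (eq_on_two_circles s c S C 1 (c * c)); auto; ring. }
  rewrite cos_minus, sin_minus, <- Hnorm. fold C S.
  split.
  - transitivity (C * (cos θ * ((s + c * C) * (s + c * C) + (c * S) * (c * S)))
                  + S * (sin θ * ((s + c * C) * (s + c * C) + (c * S) * (c * S)))); [ring|].
    rewrite Hcos, Hsin.
    apply (eq_on_two_circles s c S C C (2 * s * c + c * c * C)); auto; ring.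
  - transitivity (S * (cos θ * ((s + c * C) * (s + c * C) + (c * S) * (c * S)))
                  - C * (sin θ * ((s + c * C) * (s + c * C) + (c * S) * (c * S)))); [ring|].
    rewrite Hcos, Hsin.
    apply (eq_on_two_circles s c S C 0 (- (c * c * S))); auto; ring.
Qed.

Lemma beta_out_angle l t (x : bool) :
  beta l (out_angle t x) = beta l t + (if x then delta l t else 0).
Proof. unfold out_angle, delta. destruct x; rewrite ?Rplus_0_r; ring. Qed.

Lemma delta_closed_form l t : 0 <= l < PI / 2 ->
  eqm2pi (delta l t) (PI - 2 * atan (sin t * tan l)).
Proof.
  intros Hl. pose proof PI_RGT_0.
  assert (Hk : 0 < cos l) by (apply cos_gt_0; lra).
  destruct (cos_sin_beta l t Hl) as [Hc0 Hs0].
  destruct (cos_sin_beta l (t + PI) Hl) as [Hc1 Hs1].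
  rewrite neg_cos in Hc1, Hs1. rewrite neg_sin in Hs1.
  destruct (cos_sin_double_atan (sin t * sin l) (cos l)) as [Hcθ Hsθ]; [lra|].
  replace (sin t * tan l) with (sin t * sin l / cos l) by (unfold tan; field; lra).
  apply eqm2pi_iff_cos_sin. unfold delta.
  rewrite cos_minus, sin_minus, Rtrigo_facts.cos_pi_minus, sin_PI_x.
  pose proof (sin2_cos2 l) as Hσk. pose proof (sin2_cos2 t) as HSC. unfold Rsqr in *.
  set (θ := 2 * atan (sin t * sin l / cos l)) in *.
  set (σ := sin l) in *. set (k := cos l) in *. set (C := cos t) in *. set (S := sin t) in *.
  set (W := k * k + (S * σ) * (S * σ)) in *.
  assert (HW : (1 + σ * C) * (1 + σ * - C) = W).
  { apply (eq_on_two_circles σ k S C (-1) (- (σ * σ))); auto; unfold W; ring. }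
  assert (HW0 : 0 < W) by (unfold W; nra).
  split; apply (Rmult_eq_reg_r W); try lra; rewrite <- HW at 1.
  - transitivity (cos (beta l (t + PI)) * (1 + σ * - C) * (cos (beta l t) * (1 + σ * C))
                  + sin (beta l (t + PI)) * (1 + σ * - C) * (sin (beta l t) * (1 + σ * C)));
      [ring|].
    transitivity (- (cos θ * W)); [|ring].
    rewrite Hc0, Hs0, Hc1, Hs1, Hcθ.
    apply (eq_on_two_circles σ k S C (1 - S * S) (-1)); auto; ring.
  - transitivity (sin (beta l (t + PI)) * (1 + σ * - C) * (cos (beta l t) * (1 + σ * C))
                  - cos (beta l (t + PI)) * (1 + σ * - C) * (sin (beta l t) * (1 + σ * C)));
      [ring|].
    rewrite Hc0, Hs0, Hc1, Hs1, Hsθ. ring.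
Qed.

Lemma braket_eq_ket_real t a b :
  braket (eq_ket t) (RtoC a, RtoC b)
  = (/ sqrt 2 * (a + b * cos t), - (/ sqrt 2 * (b * sin t))).
Proof. unfold braket, eq_ket, expi, Cconj, Cmult, Cplus, RtoC. simpl. f_equal; ring. Qed.

Lemma braket_eq_v_neq_0 l t : 0 <= l < PI / 2 -> braket (eq_ket t) (v_ket l) <> 0%C.
Proof.
  intros Hl E. pose proof (one_add_sin_mul_cos_pos l t Hl) as Hd.
  unfold v_ket in E. rewrite braket_eq_ket_real in E.
  destruct (sin_cos_half l) as [Hs2 _]. rewrite Hs2 in Hd.
  pose proof (sin2_cos2 (l / 2)) as Hsc. pose proof (sin2_cos2 t) as HCS.
  unfold Rsqr in *.
  set (s := sin (l / 2)) in *. set (c := cos (l / 2)) in *.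
  set (C := cos t) in *. set (S := sin t) in *.
  assert (Hr : 0 < / sqrt 2) by (apply Rinv_0_lt_compat, sqrt_lt_R0; lra).
  injection E as Ere Eim.
  assert (Hre : c + s * C = 0) by nra.
  assert (Him : s * S = 0) by nra.
  assert (Hnorm : (c + s * C) * (c + s * C) + (s * S) * (s * S) = 1 + 2 * s * c * C).
  { apply (eq_on_two_circles s c S C 1 (s * s)); auto; ring. }
  rewrite Hre, Him in Hnorm. lra.
Qed.

Lemma braket_eq_w l t : 0 <= l < PI / 2 ->
  braket (eq_ket t) (w_ket l) = (braket (eq_ket t) (v_ket l) * expi (beta l t))%C.
Proof.
  intros Hl. pose proof (one_add_sin_mul_cos_pos l t Hl) as Hd.
  destruct (cos_sin_beta l t Hl) as [Hcos Hsin].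
  unfold v_ket, w_ket, expi. rewrite !braket_eq_ket_real.
  destruct (sin_cos_half l) as [Hs2 Hc2]. rewrite Hs2, Hc2 in *.
  pose proof (sin2_cos2 (l / 2)) as Hsc. pose proof (sin2_cos2 t) as HCS.
  unfold Rsqr in *.
  set (s := sin (l / 2)) in *. set (c := cos (l / 2)) in *.
  set (C := cos t) in *. set (S := sin t) in *.
  set (r := / sqrt 2). set (d := 1 + 2 * s * c * C) in *.
  unfold Cmult. simpl. f_equal; apply (Rmult_eq_reg_r d); try lra; symmetry.
  - transitivity (r * ((c + s * C) * (cos (beta l t) * d) + s * S * (sin (beta l t) * d))); [ring|].
    rewrite Hcos, Hsin. unfold d.
    apply (eq_on_two_circles s c S C (r * s * S * S) (r * (s - 2 * s * c * c))); auto; ring.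
  - transitivity (r * ((c + s * C) * (sin (beta l t) * d) - s * S * (cos (beta l t) * d))); [ring|].
    rewrite Hcos, Hsin. unfold d.
    apply (eq_on_two_circles s c S C (r * (- c * S + s * C * S)) 0); auto; ring.
Qed.

Lemma delta_upper_arc l t : 0 <= l < PI / 2 -> 0 <= t <= PI -> upper_arc (delta l t).
Proof.
  intros Hl Ht. pose proof PI_RGT_0.
  exists (PI - 2 * atan (sin t * tan l)). split; [|now apply delta_closed_form].
  assert (Hq : 0 <= sin t * tan l).
  { apply Rmult_le_pos; [apply sin_ge_0; lra|].
    apply Rle_mult_inv_pos; [apply sin_ge_0 | apply cos_gt_0]; lra. }
  assert (Hatan : 0 <= atan (sin t * tan l)).
  { destruct Hq as [Hq | <-]; [|now rewrite atan_0; right].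
    rewrite <- atan_0. left. now apply atan_increasing. }
  pose proof (atan_bound (sin t * tan l)). lra.
Qed.

Lemma expi_add x y : expi (x + y) = (expi x * expi y)%C.
Proof. unfold expi, Cmult. simpl. rewrite cos_plus, sin_plus. f_equal; ring. Qed.

Lemma one_add_expi_eq_0 t : (1 + expi t)%C = 0%C <-> eqm2pi t PI.
Proof.
  rewrite eqm2pi_iff_cos_sin, cos_PI, sin_PI. unfold expi, Cplus, RtoC. simpl.
  split.
  - intros E. injection E as Ec Es. lra.
  - intros [-> ->]. f_equal; ring.
Qed.

Lemma Cmult_eq_0_iff_r (z w : C) : z <> 0%C -> (z * w)%C = 0%C <-> w = 0%C.
Proof.
  intros Hz. split; intros E.
  - rewrite <- (Cmult_1_l w), <- (Cinv_l z Hz), <- Cmult_assoc, E. apply Cmult_0_r.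
  - rewrite E. apply Cmult_0_r.
Qed.

Lemma impossible_iff_phase l1 l2 l3 Phi A B Cc a b c :
  0 <= l1 < PI / 2 -> 0 <= l2 < PI / 2 -> 0 <= l3 < PI / 2 ->
  impossible l1 l2 l3 Phi A B Cc a b c <->
  eqm2pi (Phi + beta l1 (out_angle A a) + beta l2 (out_angle B b)
          + beta l3 (out_angle Cc c)) PI.
Proof.
  intros H1 H2 H3. unfold impossible, amplitude.
  rewrite !braket_eq_w by assumption.
  rewrite <- one_add_expi_eq_0, !expi_add.
  set (pa := braket (eq_ket (out_angle A a)) (v_ket l1)).
  set (pb := braket (eq_ket (out_angle B b)) (v_ket l2)).
  set (pc := braket (eq_ket (out_angle Cc c)) (v_ket l3)).
  assert (Hr : RtoC (/ sqrt 2) <> 0%C).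
  { intros E. injection E as E.
    assert (0 < / sqrt 2) by (apply Rinv_0_lt_compat, sqrt_lt_R0; lra). lra. }
  match goal with |- (?L = _) <-> _ =>
    replace L with (RtoC (/ sqrt 2) * pa * pb * pc *
      (1 + expi Phi * expi (beta l1 (out_angle A a)) * expi (beta l2 (out_angle B b))
           * expi (beta l3 (out_angle Cc c))))%C by ring end.
  apply Cmult_eq_0_iff_r.
  repeat apply Cmult_neq_0; auto; now apply braket_eq_v_neq_0.
Qed.

Lemma pair_claim_of_phase (imp : bool -> bool -> Prop) T d1 d2 :
  upper_arc d1 -> upper_arc d2 ->
  (forall x y, imp x y <-> eqm2pi (T + (if x then d1 else 0) + (if y then d2 else 0)) PI) ->
  pair_claim imp d1 d2.
Proof.
  intros H1 H2 Himp. unfold pair_claim. rewrite !Himp, !Rplus_0_r.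
  rewrite <- (eqm2pi_add_0_iff d1 d2 H1 H2), <- (eqm2pi_sub_0 d1 d2).
  split; [|split; [|split]]; intros Hphase; rewrite (eqm2pi_PI_iff _ _ Hphase).
  - now replace (T + d1 + d2 - T) with (d1 + d2) by ring.
  - replace (T - (T + d1 + d2)) with (- (d1 + d2)) by ring. apply eqm2pi_opp_0.
  - now replace (T + d1 - (T + d2)) with (d1 - d2) by ring.
  - replace (T + d2 - (T + d1)) with (- (d1 - d2)) by ring. apply eqm2pi_opp_0.
Qed.

Theorem lemma8 (l1 l2 l3 Phi A B Cc : R)
  (hl1 : 0 <= l1 < PI / 2) (hl2 : 0 <= l2 < PI / 2) (hl3 : 0 <= l3 < PI / 2)
  (hPhi : 0 <= Phi < 2 * PI)
  (hA : 0 <= A < PI) (hB : 0 <= B < PI) (hC : 0 <= Cc < PI) :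
  (* qubits 1,2 with outcome c of qubit 3 fixed *)
  (forall c : bool,
     pair_claim (fun x y => impossible l1 l2 l3 Phi A B Cc x y c)
                (delta l1 A) (delta l2 B)) /\
  (* qubits 1,3 with outcome b of qubit 2 fixed *)
  (forall b : bool,
     pair_claim (fun x z => impossible l1 l2 l3 Phi A B Cc x b z)
                (delta l1 A) (delta l3 Cc)) /\
  (* qubits 2,3 with outcome a of qubit 1 fixed *)
  (forall a : bool,
     pair_claim (fun y z => impossible l1 l2 l3 Phi A B Cc a y z)
                (delta l2 B) (delta l3 Cc)).
Proof.
  pose proof (delta_upper_arc l1 A hl1 ltac:(lra)) as Harc1.
  pose proof (delta_upper_arc l2 B hl2 ltac:(lra)) as Harc2.
  pose proof (delta_upper_arc l3 Cc hl3 ltac:(lra)) as Harc3.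
  set (P := Phi + beta l1 A + beta l2 B + beta l3 Cc).
  split; [|split]; intros u;
    [ apply (pair_claim_of_phase _ (P + if u then delta l3 Cc else 0))
    | apply (pair_claim_of_phase _ (P + if u then delta l2 B else 0))
    | apply (pair_claim_of_phase _ (P + if u then delta l1 A else 0)) ]; auto;
    intros x y; rewrite impossible_iff_phase, !beta_out_angle by assumption;
    f_equiv; unfold P; ring.
Qed.
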